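(* Let $C$ be a self-adjoint positive operator on a separable complex Hilbert space $\mathfrak{h}$ and let $L\in\mathfrak{L}((\mathcal{D}(C),\|\cdot\|_C),\mathfrak{h})$. Then $L\circ\pi_C:(\mathfrak{h},\mathcal{B}(\mathfrak{h}))\to(\mathfrak{h},\mathcal{B}(\mathfrak{h}))$ is measurable.
   Context: $\|x\|_C^2=\|x\|^2+\|Cx\|^2$; $\mathfrak{L}(\mathfrak{X},\mathfrak{Z})$ denotes bounded linear operators; $\pi_C(x)=x$ if $x\in\mathcal{D}(C)$ and $\pi_C(x)=0$ otherwise; $\mathcal{B}(\mathfrak{h})$ is the Borel $\sigma$-algebra. *)

From HB Require Import structures.
From mathcomp Require Import all_boot all_order all_algebra.
From mathcomp Require Import complex.
From mathcomp Require Import all_classical all_reals all_analysis.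
Import Order.TTheory GRing.Theory Num.Theory.
Local Open Scope ring_scope.
Local Open Scope classical_set_scope.
Local Open Scope complex_scope.
Set Implicit Arguments.
Unset Strict Implicit.

(* A complex Hilbert space is modelled as a complete normed space V over
   R[i] (R a realType) together with an inner product ip inducing the norm.
   Convention: ip is linear in the first argument, conjugate-linear in the
   second. *)

Definition is_inner_product (R : realType) (V : completeNormedModType R[i])
    (ip : V -> V -> R[i]) : Prop :=
  [/\ (forall (a : R[i]) (x y z : V), ip (a *: x + y) z = a * ip x z + ip y z),
      (forall x y : V, ip y x = Num.conj (ip x y)) &
      (forall x : V, `|x| ^+ 2 = ip x x)].

Definition separable_space (T : topologicalType) : Prop :=
  exists u : nat -> T, dense (range u).

Definition subspace (R : realType) (V : completeNormedModType R[i]) (D : set V) : Prop :=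
  D 0 /\ (forall (a : R[i]) (x y : V), D x -> D y -> D (a *: x + y)).

Definition linear_on (R : realType) (V : completeNormedModType R[i]) (D : set V)
    (f : V -> V) : Prop :=
  forall (a : R[i]) (x y : V), D x -> D y -> f (a *: x + y) = a *: f x + f y.

Definition dd_operator (R : realType) (V : completeNormedModType R[i]) (D : set V)
    (C : V -> V) : Prop :=
  [/\ subspace D, dense D & linear_on D C].

Definition adjoint_domain (R : realType) (V : completeNormedModType R[i])
    (ip : V -> V -> R[i]) (D : set V) (C : V -> V) : set V :=
  [set y | exists z : V, forall x, D x -> ip (C x) y = ip x z].

Definition self_adjoint (R : realType) (V : completeNormedModType R[i])
    (ip : V -> V -> R[i]) (D : set V) (C : V -> V) : Prop :=
  [/\ dd_operator D C,
      adjoint_domain ip D C = D &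
      (forall x y, D x -> D y -> ip (C x) y = ip x (C y))].

Definition positive_op (R : realType) (V : completeNormedModType R[i])
    (ip : V -> V -> R[i]) (D : set V) (C : V -> V) : Prop :=
  forall x, D x -> 0 <= ip (C x) x.

Definition graph_norm2 (R : realType) (V : completeNormedModType R[i])
    (C : V -> V) (x : V) : R[i] := `|x| ^+ 2 + `|C x| ^+ 2.

(* L : (D(C), ||.||_C) -> V bounded linear (only values on D matter) *)
Definition bounded_from_graph (R : realType) (V : completeNormedModType R[i])
    (D : set V) (C : V -> V) (L : V -> V) : Prop :=
  linear_on D L /\
  exists M : R[i], 0 <= M /\ forall x, D x -> `|L x| ^+ 2 <= M ^+ 2 * graph_norm2 C x.

Definition pi_dom (R : realType) (V : completeNormedModType R[i]) (D : set V) (x : V) : V :=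
  if pselect (D x) then x else 0.

Definition borel_sets (T : topologicalType) : set (set T) := <<s (@open T) >>.

Definition borel_measurable (T U : topologicalType) (f : T -> U) : Prop :=
  forall B, borel_sets B -> borel_sets (f @^-1` B).

From Pilot Require Import Defs.
From HB Require Import structures.
From mathcomp Require Import all_boot all_order all_algebra.
From mathcomp Require Import complex.
From mathcomp Require Import all_classical all_reals all_analysis.
From mathcomp Require Import ring lra.
Import Order.TTheory GRing.Theory Num.Theory.
Local Open Scope ring_scope.
Local Open Scope classical_set_scope.
Local Open Scope complex_scope.

(* For [s > 0] the Tikhonov functional [y |-> ||y - x||^2 + s ||C y||^2] attains its minimum
   on D(C) at the resolvent [(1 + s C^2)^-1 x]; existence uses completeness of the space and
   closedness of the self-adjoint [C].  The resolvent and [C] composed with it are Lipschitz,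
   the resolvent tends to [x] as [s -> 0], and [||C (1 + s C^2)^-1 x||] increases as [s]
   decreases, staying bounded exactly when [x] lies in D(C), in which case it converges to
   [C x].  Hence D(C) is a countable union of closed sets, and on D(C) the continuous maps
   [L (1 + s C^2)^-1] converge pointwise to [L] by the graph-norm bound, while [L \o pi_C] is
   constant off D(C).  A function that is a pointwise limit of continuous maps on a Borel set
   and constant off it is Borel measurable. *)

Section RealNorm.
Context {R : realType} {V : completeNormedModType R[i]}.

(* The norm of V takes values in R[i]; all estimates are done on its real part. *)
Definition nrm (u : V) : R := complex.Re `|u|.

Lemma normc_nrm (u : V) : `|u| = (nrm u)%:C.
Proof. by rewrite /nrm RRe_real //; exact: ger0_real. Qed.

Lemma nrm_ge0 (u : V) : 0 <= nrm u.
Proof. by rewrite -ler0c -normc_nrm. Qed.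

Lemma nrm_eq0 (u : V) : nrm u = 0 -> u = 0.
Proof. by move=> h; apply/normr0_eq0; rewrite normc_nrm h. Qed.

Lemma nrm0 : nrm (0 : V) = 0.
Proof. by rewrite /nrm normr0. Qed.

Lemma nrmN (u : V) : nrm (- u) = nrm u.
Proof. by rewrite /nrm normrN. Qed.

Lemma nrm_distC (u v : V) : nrm (u - v) = nrm (v - u).
Proof. by rewrite /nrm distrC. Qed.

Lemma nrm_triangle (u v : V) : nrm (u + v) <= nrm u + nrm v.
Proof. by rewrite -lecR rmorphD /= -!normc_nrm ler_normD. Qed.

Lemma nrmZ (a : R[i]) (u : V) : nrm (a *: u) = complex.Re `|a| * nrm u.
Proof. by rewrite /nrm normrZ normc_nrm; case: `|a| => x y /=; rewrite mulr0 subr0. Qed.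

Lemma nrmZr (r : R) (u : V) : nrm (r%:C *: u) = `|r| * nrm u.
Proof. by rewrite nrmZ normc_def /= expr0n /= addr0 sqrtr_sqr. Qed.

Lemma nrmZi (u : V) : nrm ('i *: u) = nrm u.
Proof. by rewrite nrmZ normc_def /= expr0n /= add0r expr1n sqrtr1 mul1r. Qed.

Lemma ltc_nrm (u : V) (e : R) : (`|u| < e%:C) = (nrm u < e).
Proof. by rewrite normc_nrm ltcR. Qed.

Lemma ball_nrm (x y : V) (r : R) : ball x r%:C y <-> nrm (x - y) < r.
Proof. by rewrite -ball_normE /= ltc_nrm. Qed.

Definition cvgV (u : nat -> V) (l : V) :=
  forall e : R, 0 < e -> exists K, forall n, (K <= n)%N -> nrm (u n - l) < e.

Definition cauchyV (u : nat -> V) :=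
  forall e : R, 0 < e -> exists K, forall n m, (K <= n)%N -> (K <= m)%N -> nrm (u n - u m) < e.

Lemma cvgV_cst (l : V) : cvgV (fun _ => l) l.
Proof. by move=> e he; exists 0%N => n _; rewrite subrr nrm0. Qed.

Lemma cvgV_scalei {v : nat -> V} {l} : cvgV v l -> cvgV (fun n => 'i *: v n) ('i *: l).
Proof. by move=> h e /h [K hK]; exists K => n /hK; rewrite -scalerBr nrmZi. Qed.

Definition cvgR (a : nat -> R) (l : R) :=
  forall e : R, 0 < e -> exists K, forall n, (K <= n)%N -> `|a n - l| < e.

Lemma cvgR_unique {a : nat -> R} {l l'} : cvgR a l -> cvgR a l' -> l = l'.
Proof.
move=> h h'; apply/eqP; rewrite -subr_eq0 -normr_eq0; apply/eqP.
apply/le_anti; rewrite normr_ge0 andbT.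
apply/ler_addgt0Pr => e he; rewrite add0r.
have [K hK] := h _ (divr_gt0 he (ltr0n _ 2)); have [K' hK'] := h' _ (divr_gt0 he (ltr0n _ 2)).
have := hK (maxn K K') (leq_maxl _ _); have := hK' (maxn K K') (leq_maxr _ _).
set x := a _ => h1 h2.
have := ler_normB (x - l') (x - l).
by rewrite opprB addrC addrA subrK; lra.
Qed.

Lemma cvgR_ext (a b : nat -> R) l : a =1 b -> cvgR a l -> cvgR b l.
Proof. by move=> hab h e /h [K hK]; exists K => n /hK; rewrite hab. Qed.

End RealNorm.

Lemma gt0_complex {R : realType} (e : R[i]) :
  0 < e -> e = (complex.Re e)%:C /\ 0 < complex.Re e.
Proof. by case: e => a b; rewrite ltcE /= => /andP[/eqP -> ha]. Qed.

Lemma nbhs_infty_ex (P : nat -> Prop) :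
  (\forall n \near \oo, P n) <-> exists K, forall n, (K <= n)%N -> P n.
Proof. by split=> [[K _ hK]|[K hK]]; exists K => // n /hK. Qed.

Lemma natSinv_lt {R : realType} {e : R} :
  0 < e -> exists K, forall n, (K <= n)%N -> n.+1%:R^-1 < e.
Proof. by move=> he; apply/nbhs_infty_ex; exact: (near_infty_natSinv_lt (PosNum he)). Qed.

Lemma natSinv_gt0 {R : realType} (n : nat) : 0 < (n.+1%:R^-1 : R).
Proof. by rewrite invr_gt0 ltr0n. Qed.

Lemma natSinv_le {R : realType} {K n : nat} : (K <= n)%N -> (n.+1%:R^-1 : R) <= K.+1%:R^-1.
Proof. by move=> hKn; rewrite lef_pV2 ?posrE ?ltr0n // ler_nat ltnS. Qed.

Lemma lt_sqr_ge0 {R : realType} (a e : R) : 0 <= a -> 0 < e -> a ^+ 2 < e ^+ 2 -> a < e.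
Proof. by move=> ha he; rewrite ltr_sqr ?nnegrE //; exact: ltW. Qed.

Lemma quadratic_ge0_linear_eq0 {R : realType} (B Q : R) :
  (forall t : R, 0 <= 2 * t * B + t ^+ 2 * Q) -> B = 0.
Proof.
move=> hq; have hQ : 0 <= Q by have := hq 1; have := hq (-1); lra.
set t := - B / (Q + 1).
have ht : t * (Q + 1) = - B by rewrite /t mulfVK //; apply/eqP; lra.
have t0 : t = 0.
  apply/eqP; rewrite -sqrf_eq0 eq_le sqr_ge0 andbT.
  by have := hq t; rewrite -(opprK B) -ht; nra.
by apply/eqP; rewrite -oppr_eq0 -ht t0 mul0r.
Qed.

Section NormedSpace.
Context {R : realType} {V : completeNormedModType R[i]}.

Lemma cauchyV_cvg {u : nat -> V} : cauchyV u -> exists l, cvgV u l.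
Proof.
move=> hu.
have hc : cauchy (u @ \oo).
  apply: cauchy_exP => eps /gt0_complex [-> he].
  have [K hK] := hu _ he; exists (u K).
  apply/nbhs_infty_ex; exists K => n hn /=.
  by rewrite -ball_normE /= ltc_nrm; exact: hK.
have hcv : cvgn u by apply: cauchy_cvg.
exists (lim (u @ \oo)) => e he.
have := (@cvgrPdist_lt _ _ _ _ _ u _).1 hcv e%:C; rewrite ltcR => /(_ _ he) /nbhs_infty_ex [K hK].
by exists K => n /hK; rewrite nrm_distC ltc_nrm.
Qed.

Lemma cauchyV_natSinv (u : nat -> V) (c : R) :
  (forall n k, nrm (u n - u k) ^+ 2 <= c * (n.+1%:R^-1 + k.+1%:R^-1)) -> cauchyV u.
Proof.
move=> hu e he.
have hc : 0 < 2 * (`|c| + 1) by have := normr_ge0 c; lra.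
have [K hK] := natSinv_lt (divr_gt0 (exprn_gt0 2 he) hc).
exists K => n k hn hk; apply: lt_sqr_ge0 => //; first exact: nrm_ge0.
have := hK K (leqnn K); rewrite ltr_pdivlMr // => hKe.
have := hu n k; have := natSinv_le (R := R) hn; have := natSinv_le (R := R) hk.
have := natSinv_gt0 (R := R) n; have := natSinv_gt0 (R := R) k.
have := ler_norm c; have := normr_ge0 c.
move: (n.+1%:R^-1 : R) (k.+1%:R^-1 : R) (K.+1%:R^-1 : R) `|c| hKe => a b d q *; nra.
Qed.

Lemma dense_approx {D : set V} : dense D ->
  forall x {e : R}, 0 < e -> exists2 y, D y & nrm (y - x) < e.
Proof.
move=> hD x e he.
have [y [hy1 hy2]] : (ball x e%:C `&` D) !=set0.
  apply: hD; first by exists x; apply: ballxx; rewrite ltcR.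
  exact: ball_open.
by exists y => //; move: hy1; rewrite ball_nrm nrm_distC.
Qed.

Lemma dense_seq {D : set V} : dense D ->
  forall x, exists y : nat -> V, (forall n, D (y n)) /\ cvgV y x.
Proof.
move=> hD x.
have /choice [y hy] : forall n, exists y, D y /\ nrm (y - x) < n.+1%:R^-1.
  by move=> n; have [y] := dense_approx hD x (natSinv_gt0 n); exists y.
exists y; split => [n|e /natSinv_lt [K hK]]; first by case: (hy n).
by exists K => n hn; case: (hy n) => _ h1; exact: lt_trans h1 (hK n hn).
Qed.

Lemma openP_nrm (O : set V) :
  open O <-> forall x, O x -> exists2 r : R, 0 < r & forall y, nrm (x - y) < r -> O y.
Proof.
split.
  rewrite openE => hO x /hO /nbhs_ballP [r /gt0_complex [er hr] hb].
  by exists (complex.Re r) => // y hy; apply: hb; rewrite er ball_nrm.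
move=> h; rewrite openE => x /h [r hr hO].
apply/nbhs_ballP; exists r%:C; first by rewrite /= ltcR.
by move=> y /ball_nrm /hO.
Qed.

Lemma cvgV_sqr_bound {u a b : nat -> V} {l la lb} {k : R} : cvgV a la -> cvgV b lb ->
  (forall n, nrm (u n - l) ^+ 2 <= k * (nrm (a n - la) ^+ 2 + nrm (b n - lb) ^+ 2)) ->
  cvgV u l.
Proof.
move=> ha hb hu e he; set K := `|k| + 1.
have hK : 1 <= K by rewrite /K; have := normr_ge0 k; lra.
have hkK : k <= K by rewrite /K; have := ler_norm k; lra.
have hd : 0 < e / (2 * K) by rewrite divr_gt0 //; lra.
have [[N1 h1] [N2 h2]] := (ha _ hd, hb _ hd).
exists (maxn N1 N2) => n hn; apply: lt_sqr_ge0 => //; first exact: nrm_ge0.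
have := h1 n (leq_trans (leq_maxl _ _) hn); have := h2 n (leq_trans (leq_maxr _ _) hn).
have := nrm_ge0 (a n - la); have := nrm_ge0 (b n - lb); have := hu n.
have hKd : 2 * K * (e / (2 * K)) = e by field; lra.
move: hKd hd; clearbody K; move: (e / (2 * K)) (nrm (u n - l)) (nrm (a n - la)) (nrm (b n - lb)).
move=> d Q A B hKd hd hQ hB0 hA0 hB hA.
have hAB : A ^+ 2 + B ^+ 2 <= 2 * d ^+ 2 by nra.
have hX : 0 <= A ^+ 2 + B ^+ 2 by rewrite addr_ge0 ?sqr_ge0.
have := ler_wpM2r hX hkK; have := ler_wpM2l (le_trans ler01 hK) hAB.
have hde : d < e.
  have : 0 <= d * (K - 1) by apply: mulr_ge0; lra.
  lra.
nra.
Qed.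

Lemma lipschitz_sqr_continuous (f : V -> V) (k : R) :
  (forall x y, nrm (f x - f y) ^+ 2 <= k * nrm (x - y) ^+ 2) -> continuous f.
Proof.
move=> hf; apply/continuousP => O /openP_nrm hO; apply/openP_nrm => x /hO [r hr hb].
set K := `|k| + 1; have hK : 1 <= K by rewrite /K; have := normr_ge0 k; lra.
have hkK : k <= K by rewrite /K; have := ler_norm k; lra.
exists (r / K); first by rewrite divr_gt0 //; lra.
move=> y; rewrite ltr_pdivlMr; last lra.
move=> hy; apply: hb; apply: lt_sqr_ge0 => //; first exact: nrm_ge0.
have := hf x y; have := nrm_ge0 (x - y); move: hy; clearbody K.
move: (nrm (f x - f y)) (nrm (x - y)) => a b hy hb0 hab.
have hb2 : k * b ^+ 2 <= K ^+ 2 * b ^+ 2 by apply: ler_wpM2r; [exact: sqr_ge0 | nra].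
have hKb : (b * K) ^+ 2 < r ^+ 2.
  by rewrite ltr_sqr ?nnegrE ?(ltW hr) //; apply: mulr_ge0 => //; lra.
by rewrite exprMn in hKb; lra.
Qed.

Lemma open_nrm_gt (K : R) : open [set y : V | K < nrm y].
Proof.
apply/openP_nrm => x /= hx; exists (nrm x - K) => [|y hy]; first lra.
by have := nrm_triangle (x - y) y; rewrite subrK; lra.
Qed.

Lemma open_near (A : set V) (r : R) : open [set y | exists2 z, A z & nrm (y - z) < r].
Proof.
apply/openP_nrm => x [z hz hxz]; exists (r - nrm (x - z)); first lra.
move=> y hy; exists z => //; have := nrm_triangle (y - x) (x - z).
by rewrite addrA subrK (nrm_distC y x); lra.
Qed.

End NormedSpace.

Definition rip {R : realType} {V : completeNormedModType R[i]}
    (ip : V -> V -> R[i]) (u v : V) : R :=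
  complex.Re (ip u v).

Section InnerProduct.
Context {R : realType} {V : completeNormedModType R[i]} {ip : V -> V -> R[i]}.
Hypothesis Hip : is_inner_product ip.

Lemma ip_addl x y z : ip (x + y) z = ip x z + ip y z.
Proof. by case: Hip => lin _ _; rewrite -{1}[x]scale1r lin mul1r. Qed.

Lemma ip_conj x y : ip y x = conjc (ip x y).
Proof. by case: Hip. Qed.

Lemma ip0l z : ip 0 z = 0.
Proof. by apply: (addrI (ip 0 z)); rewrite -ip_addl !addr0. Qed.

Lemma ipZl a x z : ip (a *: x) z = a * ip x z.
Proof. by case: Hip => lin _ _; rewrite -[a *: x]addr0 lin ip0l addr0. Qed.

Lemma ipZr a x z : ip z (a *: x) = conjc a * ip z x.
Proof. by rewrite ip_conj ipZl rmorphM /= -ip_conj. Qed.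

Lemma ipNl x z : ip (- x) z = - ip x z.
Proof. by rewrite -scaleN1r ipZl mulN1r. Qed.

Lemma ip_addr x y z : ip z (x + y) = ip z x + ip z y.
Proof. by rewrite ip_conj ip_addl rmorphD /= -!ip_conj. Qed.

Lemma ipNr x z : ip z (- x) = - ip z x.
Proof. by rewrite ip_conj ipNl rmorphN /= -!ip_conj. Qed.

Lemma ripC x y : rip ip x y = rip ip y x.
Proof. by rewrite /rip (ip_conj x y); case: (ip x y). Qed.

Lemma rip_addl x y z : rip ip (x + y) z = rip ip x z + rip ip y z.
Proof. by rewrite /rip ip_addl; case: (ip x z); case: (ip y z). Qed.

Lemma rip_addr x y z : rip ip z (x + y) = rip ip z x + rip ip z y.
Proof. by rewrite /rip ip_addr; case: (ip z x); case: (ip z y). Qed.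

Lemma ripNl x z : rip ip (- x) z = - rip ip x z.
Proof. by rewrite /rip ipNl; case: (ip x z). Qed.

Lemma ripNr x z : rip ip z (- x) = - rip ip z x.
Proof. by rewrite /rip ipNr; case: (ip z x). Qed.

Lemma ripZl (r : R) x z : rip ip (r%:C *: x) z = r * rip ip x z.
Proof. by rewrite /rip ipZl; case: (ip x z) => a b /=; rewrite mul0r subr0. Qed.

Lemma ripZr (r : R) x z : rip ip z (r%:C *: x) = r * rip ip z x.
Proof. by rewrite ripC ripZl ripC. Qed.

Lemma rip0r z : rip ip z 0 = 0.
Proof. by rewrite ripC /rip ip0l. Qed.

Lemma nrm_sqr u : nrm u ^+ 2 = rip ip u u.
Proof. by case: Hip => _ _ h; rewrite /rip -h normc_nrm -rmorphXn. Qed.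

Lemma Im_ip u w : complex.Im (ip u w) = rip ip u ('i *: w).
Proof. by rewrite /rip ipZr; case: (ip u w) => a b /=; lra. Qed.

Lemma ip_eq {u u' w w'} :
  rip ip u w = rip ip u' w' -> rip ip u ('i *: w) = rip ip u' ('i *: w') -> ip u w = ip u' w'.
Proof.
by rewrite -!Im_ip /rip; case: (ip u w) => a b; case: (ip u' w') => c d /= -> ->.
Qed.

Lemma nrmD_sqr u v : nrm (u + v) ^+ 2 = nrm u ^+ 2 + 2 * rip ip u v + nrm v ^+ 2.
Proof. by rewrite !nrm_sqr rip_addl !rip_addr (ripC v u); lra. Qed.

Lemma nrmB_sqr u v : nrm (u - v) ^+ 2 = nrm u ^+ 2 - 2 * rip ip u v + nrm v ^+ 2.
Proof. by rewrite nrmD_sqr ripNr nrmN mulrN. Qed.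

Lemma rip_le_sqr u v : 2 * rip ip u v <= nrm u ^+ 2 + nrm v ^+ 2.
Proof. by have := sqr_ge0 (nrm (u - v)); rewrite nrmB_sqr; lra. Qed.

(* Apply [rip_le_sqr] to [nrm w *: u] and to [w], [- w]. *)
Lemma rip_bound u w : `|rip ip u w| <= nrm w * (nrm u ^+ 2 + 1).
Proof.
have [->|wn0] := eqVneq w 0; first by rewrite rip0r normr0 nrm0 mul0r.
have tpos : 0 < nrm w.
  by rewrite lt_neqAle nrm_ge0 andbT; apply: contra_neq wn0 => /esym /nrm_eq0.
set t := nrm w.
have h1 := rip_le_sqr (t%:C *: u) w.
have h2 := rip_le_sqr (t%:C *: u) (- w).
rewrite nrmZr nrmN ripNr ripZl ger0_norm -/t in h1 h2; last exact: ltW.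
have hu := nrm_ge0 u; have hn := normr_ge0 (rip ip u w).
have [hp|hp] := lerP 0 (rip ip u w); [rewrite ger0_norm // | rewrite ltr0_norm //]; nra.
Qed.

Lemma cvgR_rip u {v : nat -> V} {l} : cvgV v l -> cvgR (fun n => rip ip u (v n)) (rip ip u l).
Proof.
move=> h e he.
have hc : 0 < nrm u ^+ 2 + 1 by have := sqr_ge0 (nrm u); lra.
have [K hK] := h (e / (nrm u ^+ 2 + 1)) (divr_gt0 he hc).
exists K => n /hK hn.
rewrite -ripNr -rip_addr; apply: le_lt_trans (rip_bound u (v n - l)) _.
by rewrite -ltr_pdivlMr.
Qed.

Lemma rip_lim_eq {w w'} {a b : nat -> V} {u v} : cvgV a u -> cvgV b v ->
  (forall n, rip ip w (a n) = rip ip w' (b n)) -> rip ip w u = rip ip w' v.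
Proof.
move=> ha hb hab; apply: (cvgR_unique (cvgR_rip w ha)) => //.
exact: cvgR_ext (fun n => esym (hab n)) (cvgR_rip w' hb).
Qed.

End InnerProduct.

Section LinearOn.
Context {R : realType} {V : completeNormedModType R[i]} {D : set V}.
Hypothesis hD : Defs.subspace D.

Lemma subspace0 : D 0.
Proof. by case: hD. Qed.

Lemma subspaceZ a {x} : D x -> D (a *: x).
Proof. by case: hD => h0 h hx; rewrite -[_ *: _]addr0; exact: h. Qed.

Lemma subspaceD {x y} : D x -> D y -> D (x + y).
Proof. by case: hD => _ h hx hy; rewrite -[x]scale1r; exact: h. Qed.

Lemma subspaceB {x y} : D x -> D y -> D (x - y).
Proof. by move=> hx hy; rewrite -scaleN1r; apply: subspaceD => //; exact: subspaceZ. Qed.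

Context {C : V -> V}.
Hypothesis hC : linear_on D C.

Lemma linear_on0 : C 0 = 0.
Proof.
have := hC (-1) 0 0 subspace0 subspace0.
by rewrite scaler0 addr0 scaleN1r addNr.
Qed.

Lemma linear_onZ a x : D x -> C (a *: x) = a *: C x.
Proof. by move=> hx; have := hC a x 0 hx subspace0; rewrite !addr0 linear_on0 addr0. Qed.

Lemma linear_onD x y : D x -> D y -> C (x + y) = C x + C y.
Proof. by move=> hx hy; have := hC 1 x y hx hy; rewrite !scale1r. Qed.

Lemma linear_onB x y : D x -> D y -> C (x - y) = C x - C y.
Proof.
move=> hx hy; rewrite -scaleN1r linear_onD ?linear_onZ ?scaleN1r //.
by rewrite -scaleN1r; exact: subspaceZ.
Qed.

End LinearOn.

Section BorelSets.
Context {T : topologicalType}.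

Lemma borel_open (A : set T) : open A -> borel_sets A.
Proof. by move=> hA; apply: sub_sigma_algebra. Qed.

Lemma borel_setC (A : set T) : borel_sets A -> borel_sets (~` A).
Proof. by rewrite -setTD; exact: sigma_algebraCD. Qed.

Lemma borel_bigcup (A : (set T)^nat) : (forall n, borel_sets (A n)) -> borel_sets (\bigcup_n A n).
Proof. exact: sigma_algebra_bigcup. Qed.

Lemma borel_bigcap (A : (set T)^nat) : (forall n, borel_sets (A n)) -> borel_sets (\bigcap_n A n).
Proof.
move=> h; rewrite -[X in borel_sets X]setCK setC_bigcap.
by apply: borel_setC; apply: borel_bigcup => n; exact: borel_setC.
Qed.

Lemma borel_setU (A B : set T) : borel_sets A -> borel_sets B -> borel_sets (A `|` B).
Proof.
move=> hA hB; rewrite -bigcup2E; apply: borel_bigcup => -[|[|n]] //=.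
exact: sigma_algebra0.
Qed.

Lemma borel_setI (A B : set T) : borel_sets A -> borel_sets B -> borel_sets (A `&` B).
Proof.
move=> hA hB; rewrite -[X in borel_sets X]setCK setCI.
by apply: borel_setC; apply: borel_setU; exact: borel_setC.
Qed.

Lemma borel_const (P : Prop) : borel_sets [set _ : T | P].
Proof.
have [hP|hP] := pselect P.
  rewrite (_ : [set _ | P] = setT); last by apply/seteqP; split.
  by rewrite -setC0; apply: borel_setC; exact: sigma_algebra0.
by rewrite (_ : [set _ | P] = set0); [exact: sigma_algebra0 | apply/seteqP; split].
Qed.

Lemma borel_measurable_open {U : topologicalType} (f : T -> U) :
  (forall O, open O -> borel_sets (f @^-1` O)) -> borel_measurable f.
Proof.
move=> h B hB; have : sigma_algebra setT [set B | borel_sets (f @^-1` B)].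
  split => /=; first by rewrite preimage_set0; exact: sigma_algebra0.
    by move=> A hA; rewrite setTD preimage_setC; exact: borel_setC.
  by move=> A hA; rewrite preimage_bigcup; exact: borel_bigcup.
by move=> hs; exact: (smallest_sub hs h hB).
Qed.

End BorelSets.

Section SelfAdjoint.
Context {R : realType} {V : completeNormedModType R[i]} {ip : V -> V -> R[i]}.
Hypothesis Hip : is_inner_product ip.
Context {D : set V} {C : V -> V}.
Hypothesis HCsa : self_adjoint ip D C.

Let Dsub : Defs.subspace D. Proof. by case: HCsa => [[]]. Qed.
Let Clin : linear_on D C. Proof. by case: HCsa => [[]]. Qed.
Let Ddense : dense D. Proof. by case: HCsa => [[]]. Qed.

Lemma orthogonal_dense_eq0 d : (forall w, D w -> rip ip w d = 0) -> d = 0.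
Proof.
move=> hd; have [w [hw hwd]] := dense_seq Ddense d.
have : rip ip d d = 0.
  rewrite -(rip0r Hip d); apply: (rip_lim_eq Hip hwd (cvgV_cst 0)) => n.
  by rewrite (ripC Hip) hd // (rip0r Hip).
by rewrite -(nrm_sqr Hip) => /eqP; rewrite sqrf_eq0 => /eqP /nrm_eq0.
Qed.

(* Self-adjoint operators are closed: the limit relation is tested against [C w], and
   [D(C^* ) = D(C)] puts the limit in the domain. *)
Lemma closed_graph {y : nat -> V} {x z} :
  (forall n, D (y n)) -> cvgV y x -> cvgV (fun n => C (y n)) z -> D x /\ C x = z.
Proof.
case: HCsa => _ hadj hsym hy hyx hCy.
have key w : D w -> ip (C w) x = ip w z.
  move=> hw; apply: (ip_eq Hip).
    by apply: (rip_lim_eq Hip hyx hCy) => n; rewrite /rip hsym.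
  apply: (rip_lim_eq Hip (cvgV_scalei hyx) (cvgV_scalei hCy)) => n.
  by rewrite -!(Im_ip Hip) hsym.
have Dx : D x by rewrite -hadj; exists z.
split => //; apply/eqP; rewrite -subr_eq0; apply/eqP/orthogonal_dense_eq0 => w hw.
by rewrite (rip_addr Hip) (ripNr Hip) /rip -hsym // key // subrr.
Qed.

(* The minimiser of [tikhonov s x] over [D] is the resolvent [(1 + s C^2)^-1 x]. *)
Definition tikhonov (s : R) (x y : V) : R := nrm (y - x) ^+ 2 + s * nrm (C y) ^+ 2.

Definition tikhonov_min s x a := D a /\ forall y, D y -> tikhonov s x a <= tikhonov s x y.

Lemma tikhonov_ge0 s x y : 0 <= s -> 0 <= tikhonov s x y.
Proof. by move=> hs; rewrite addr_ge0 ?sqr_ge0 // mulr_ge0 ?sqr_ge0. Qed.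

Lemma tikhonovD s x {a v} : D a -> D v ->
  tikhonov s x (a + v) = tikhonov s x a + 2 * (rip ip (a - x) v + s * rip ip (C a) (C v))
     + (nrm v ^+ 2 + s * nrm (C v) ^+ 2).
Proof.
move=> ha hv; rewrite /tikhonov (linear_onD Clin) // addrAC !(nrmD_sqr Hip).
ring.
Qed.

Lemma tikhonov_parallelogram s x {a h} : D a -> D h ->
  tikhonov s x (a + h) + tikhonov s x (a - h)
  = 2 * tikhonov s x a + 2 * (nrm h ^+ 2 + s * nrm (C h) ^+ 2).
Proof.
move=> ha hh; have hNh : D (- h) by rewrite -scaleN1r; exact: subspaceZ.
have CNh : C (- h) = - C h by rewrite -scaleN1r (linear_onZ Dsub Clin) // scaleN1r.
by rewrite !tikhonovD // CNh !(ripNr Hip) !nrmN; ring.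
Qed.

Lemma tikhonov_midpoint {s x m y z} : (forall w, D w -> m <= tikhonov s x w) -> D y -> D z ->
  nrm (y - z) ^+ 2 + s * nrm (C y - C z) ^+ 2
  <= 2 * (tikhonov s x y + tikhonov s x z - 2 * m).
Proof.
move=> hm hy hz.
set h := (2^-1 : R)%:C *: (y - z).
have hh : D h by apply/subspaceZ/subspaceB.
have ha : D (z + h) by exact: subspaceD.
have half : (2^-1 : R) + 2^-1 = 1 by lra.
have e1 : z + h + h = y by rewrite -addrA -scalerDl -rmorphD /= half scale1r addrC subrK.
have := tikhonov_parallelogram s x ha hh; rewrite e1 addrK.
have -> : C h = (2^-1 : R)%:C *: (C y - C z).
  by rewrite (linear_onZ Dsub Clin) ?(linear_onB Dsub Clin) //; exact: subspaceB.
rewrite !nrmZr ger0_norm ?invr_ge0 ?ler0n // !exprMn.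
have i4 : (2^-1 : R) ^+ 2 = 4^-1 by rewrite expr2; lra.
rewrite i4 => e; have := hm _ ha; lra.
Qed.

Lemma tikhonov_le_lim s x m (y : nat -> V) a : 0 <= s -> D a -> (forall n, D (y n)) ->
  cvgV y a -> cvgV (fun n => C (y n)) (C a) ->
  (forall n, tikhonov s x (y n) <= m + n.+1%:R^-1) -> tikhonov s x a <= m.
Proof.
move=> hs Da Dy ya Cya hJ; apply/ler_addgt0Pr => e he.
have he8 : 0 < e / 8 by rewrite divr_gt0.
have hs1 : 0 < s + 1 by lra.
have [K1 hK1] := cvgR_rip Hip (a - x) ya _ he8.
have [K2 hK2] := cvgR_rip Hip (C a) Cya _ (divr_gt0 he8 hs1).
have [K3 hK3] := natSinv_lt (divr_gt0 he (ltr0n R 2)).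
set n := maxn K1 (maxn K2 K3).
have Dv : D (y n - a) by exact: subspaceB.
have c1 : `|rip ip (a - x) (y n - a)| < e / 8.
  by rewrite (rip_addr Hip) (ripNr Hip); exact: hK1 (leq_maxl _ _).
have c2 : `|s * rip ip (C a) (C (y n) - C a)| < e / 8.
  have := hK2 n (leq_trans (leq_maxl _ _) (leq_maxr _ _)).
  rewrite (rip_addr Hip) (ripNr Hip) normrM ger0_norm // ltr_pdivlMr //.
  by apply: le_lt_trans; rewrite [_ * (s + 1)]mulrC ler_wpM2r ?normr_ge0 //; lra.
have c3 := hK3 n (leq_trans (leq_maxr _ _) (leq_maxr _ _)).
have := hJ n; rewrite -[y n](addrNK a) [y n - a + a]addrC tikhonovD // (linear_onB Dsub Clin) //.
have := mulr_ge0 hs (sqr_ge0 (nrm (C (y n) - C a))); have := sqr_ge0 (nrm (y n - a)).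
move: c1 c2 c3; move: (rip ip _ _) (s * rip ip _ _) (s * nrm _ ^+ 2) (nrm _ ^+ 2) (n.+1%:R^-1).
by move=> r t p q c /ltr_normlP[? ?] /ltr_normlP[? ?] *; lra.
Qed.

Lemma tikhonov_min_exists s x : 0 < s -> exists a, tikhonov_min s x a.
Proof.
move=> hs.
set S := [set tikhonov s x y | y in D].
have hinf : has_inf S.
  split; first by exists (tikhonov s x 0); exists 0 => //; exact: subspace0.
  by exists 0 => _ [y _ <-]; apply: tikhonov_ge0; exact: ltW.
have hm0 y : D y -> inf S <= tikhonov s x y by move=> hy; apply: (ge_inf hinf.2); exists y.
have /choice [y hy] : forall n : nat, exists y, D y /\ tikhonov s x y < inf S + n.+1%:R^-1.
  by move=> n; have [_ [y hy <-] hr] := inf_adherent (natSinv_gt0 n) hinf; exists y.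
have Dy n : D (y n) by case: (hy n).
have Jy n : tikhonov s x (y n) <= inf S + n.+1%:R^-1 by case: (hy n) => _ /ltW.
have gap n k : nrm (y n - y k) ^+ 2 + s * nrm (C (y n) - C (y k)) ^+ 2
              <= 2 * (n.+1%:R^-1 + k.+1%:R^-1).
  have := tikhonov_midpoint hm0 (Dy n) (Dy k); have := Jy n; have := Jy k.
  by move: (n.+1%:R^-1 : R) (k.+1%:R^-1 : R) => *; lra.
have [a ya] : exists a, cvgV y a.
  apply/cauchyV_cvg/(cauchyV_natSinv _ 2) => n k.
  have := gap n k; have := mulr_ge0 (ltW hs) (sqr_ge0 (nrm (C (y n) - C (y k)))).
  by move: (n.+1%:R^-1 + k.+1%:R^-1 : R) => *; lra.
have [z Cyz] : exists z, cvgV (fun n => C (y n)) z.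
  apply/cauchyV_cvg/(cauchyV_natSinv _ (2 / s)) => n k.
  rewrite mulrAC ler_pdivlMr //; have := gap n k; have := sqr_ge0 (nrm (y n - y k)).
  by move: (n.+1%:R^-1 + k.+1%:R^-1 : R) => *; lra.
have [Da Caz] := closed_graph Dy ya Cyz; rewrite -Caz in Cyz.
exists a; split => // w hw; apply: le_trans (hm0 w hw).
exact: tikhonov_le_lim (ltW hs) Da Dy ya Cyz Jy.
Qed.

Lemma tikhonov_min_orth {s x a} : tikhonov_min s x a ->
  forall v, D v -> rip ip (a - x) v + s * rip ip (C a) (C v) = 0.
Proof.
move=> [Da hmin] v Dv; apply: quadratic_ge0_linear_eq0 (nrm v ^+ 2 + s * nrm (C v) ^+ 2) _ => t.
have Dtv : D (t%:C *: v) by exact: subspaceZ.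
have := hmin _ (subspaceD Dsub Da Dtv).
rewrite tikhonovD // (linear_onZ Dsub Clin) // !(ripZr Hip) !nrmZr !exprMn -!normrX.
rewrite !ger0_norm ?sqr_ge0 //.
move: (rip ip _ _) (rip ip _ _) (nrm v ^+ 2) (nrm (C v) ^+ 2) => *; nra.
Qed.

Lemma tikhonov_min_expand {s x a} : tikhonov_min s x a -> forall y, D y ->
  tikhonov s x y = tikhonov s x a + nrm (y - a) ^+ 2 + s * nrm (C y - C a) ^+ 2.
Proof.
move=> ha y Dy; have Da : D a by case: ha.
have Dv : D (y - a) by exact: subspaceB.
have := tikhonovD s x Da Dv; rewrite addrC subrK (tikhonov_min_orth ha _ Dv) mulr0 addr0.
by rewrite (linear_onB Dsub Clin) // addrA.
Qed.

Definition resolvent s x := xget 0 (tikhonov_min s x).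

Lemma resolventP {s} x : 0 < s -> tikhonov_min s x (resolvent s x).
Proof. by move=> hs; apply: xgetPex; exact: tikhonov_min_exists. Qed.

Lemma resolvent_lipschitz {s} x x' : 0 < s ->
  nrm (resolvent s x - resolvent s x') ^+ 2
  + 2 * s * nrm (C (resolvent s x) - C (resolvent s x')) ^+ 2 <= nrm (x - x') ^+ 2.
Proof.
move=> hs; have [ha ha'] := (resolventP x hs, resolventP x' hs).
set a := resolvent s x in ha *; set a' := resolvent s x' in ha' *.
have [[Da _] [Da' _]] := (ha, ha'); have De : D (a - a') by exact: subspaceB.
have key : nrm (a - a') ^+ 2 - rip ip (x - x') (a - a') + s * nrm (C a - C a') ^+ 2 = 0.
  have := tikhonov_min_orth ha _ De; have := tikhonov_min_orth ha' _ De.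
  rewrite !(nrm_sqr Hip) !(linear_onB Dsub Clin) //.
  by rewrite !(rip_addl Hip) !(ripNl Hip); lra.
by have := rip_le_sqr Hip (x - x') (a - a'); lra.
Qed.

Definition resolventn (n : nat) := resolvent n.+1%:R^-1.

Lemma resolventnP n x : tikhonov_min n.+1%:R^-1 x (resolventn n x).
Proof. exact/resolventP/natSinv_gt0. Qed.

Lemma resolventn_dom n x : D (resolventn n x).
Proof. by case: (resolventnP n x). Qed.

(* [nrm (R_n x - x)^2 <= tikhonov (R_n x) <= tikhonov y] for any [y] of [D] close to [x]. *)
Lemma resolventn_cvg x : cvgV (fun n => resolventn n x) x.
Proof.
move=> e he.
have [y Dy hy] := dense_approx Ddense x (divr_gt0 he (ltr0n R 2)).
set c := nrm (C y) ^+ 2; have hc : 0 <= c by exact: sqr_ge0.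
have hc2 : 0 < 2 * (c + 1) by lra.
have [K hK] := natSinv_lt (divr_gt0 (exprn_gt0 2 he) hc2).
exists K => n /hK; rewrite ltr_pdivlMr //.
have [_ /(_ y Dy)] := resolventnP n x; rewrite /tikhonov -/c.
have hy2 : nrm (y - x) ^+ 2 < e ^+ 2 / 4.
  by move: hy (nrm_ge0 (y - x)); move: (nrm (y - x)) => q *; nra.
have := sqr_ge0 (nrm (C (resolventn n x))); have := natSinv_gt0 (R := R) n.
move: hy2 (n.+1%:R^-1 : R) (nrm (C (resolventn n x)) ^+ 2) => hy2 t b ht hb hJ hK'.
apply: lt_sqr_ge0 => //; first exact: nrm_ge0.
by have := mulr_ge0 (ltW ht) hb; clearbody c; nra.
Qed.

Lemma C_resolventn_le n {x} : D x -> nrm (C (resolventn n x)) <= nrm (C x).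
Proof.
move=> Dx; have [_ /(_ x Dx)] := resolventnP n x; rewrite /tikhonov subrr nrm0 expr0n /= add0r.
have := sqr_ge0 (nrm (resolventn n x - x)); have := natSinv_gt0 (R := R) n.
move: (n.+1%:R^-1 : R) => t ht h0 h.
rewrite -ler_sqr ?nnegrE ?nrm_ge0 // -(ler_pM2l ht); lra.
Qed.

(* Comparing the two minimality conditions, [nrm (C (R_n x))^2] increases with [n],
   by at least the squared increments. *)
Lemma C_resolventn_mono {n m} x : (n <= m)%N ->
  nrm (C (resolventn m x) - C (resolventn n x)) ^+ 2
  <= nrm (C (resolventn m x)) ^+ 2 - nrm (C (resolventn n x)) ^+ 2.
Proof.
rewrite leq_eqVlt => /orP [/eqP ->|hnm]; first by rewrite !subrr nrm0 expr0n.
have e1 := tikhonov_min_expand (resolventnP m x) _ (resolventn_dom n x).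
have e2 := tikhonov_min_expand (resolventnP n x) _ (resolventn_dom m x).
have hsr : (m.+1%:R^-1 : R) < n.+1%:R^-1 by rewrite ltf_pV2 ?posrE ?ltr0n // ltr_nat ltnS.
have := natSinv_gt0 (R := R) m.
move: e1 e2 hsr; rewrite /tikhonov (nrm_distC (resolventn n x) (resolventn m x)).
rewrite (nrm_distC (C (resolventn n x)) (C (resolventn m x))).
have := sqr_ge0 (nrm (resolventn m x - resolventn n x)).
have := sqr_ge0 (nrm (C (resolventn m x) - C (resolventn n x))).
move: (m.+1%:R^-1 : R) (n.+1%:R^-1 : R).
move: (nrm (resolventn n x - x) ^+ 2) (nrm (resolventn m x - x) ^+ 2).
move: (nrm (C (resolventn m x) - C (resolventn n x)) ^+ 2).
move: (nrm (resolventn m x - resolventn n x) ^+ 2).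
move: (nrm (C (resolventn m x)) ^+ 2) (nrm (C (resolventn n x)) ^+ 2).
move=> cs cr d X ar asx s r hX hd e1 e2 hsr hs0.
have key : (r - s) * (cs - cr) = 2 * d + (r + s) * X by nra.
have : (r - s) * X <= (r - s) * (cs - cr) by nra.
by rewrite ler_pM2l // subr_gt0.
Qed.

Lemma C_resolventn_cvg x (K : R) : (forall n, nrm (C (resolventn n x)) <= K) ->
  D x /\ cvgV (fun n => C (resolventn n x)) (C x).
Proof.
move=> hK; set c := fun n => nrm (C (resolventn n x)) ^+ 2.
have hsup : has_sup (range c).
  split; first by exists (c 0%N), 0%N.
  exists (K ^+ 2) => _ [n _ <-]; rewrite /c.
  by have := hK n; have := nrm_ge0 (C (resolventn n x)); move: (nrm _) => q *; nra.
have ub n : c n <= sup (range c) by apply: sup_upper_bound => //; exists n.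
have hcauchy : cauchyV (fun n => C (resolventn n x)).
  move=> e he; have [_ [N _ <-] hN] := sup_adherent (exprn_gt0 2 he) hsup.
  have gen n m : (N <= n)%N -> (n <= m)%N ->
      nrm (C (resolventn m x) - C (resolventn n x)) < e.
    move=> hn hnm; apply: lt_sqr_ge0 => //; first exact: nrm_ge0.
    have := C_resolventn_mono x hnm; have := C_resolventn_mono x hn.
    have := sqr_ge0 (nrm (C (resolventn n x) - C (resolventn N x))).
    by have := ub m; move: hN; rewrite /c => *; lra.
  exists N => n m hn hm; case: (leqP n m) => hnm; first by rewrite nrm_distC; exact: gen.
  exact/gen/ltnW.
have [z hz] := cauchyV_cvg hcauchy.
by have [Dx ->] := closed_graph (resolventn_dom ^~ x) (resolventn_cvg x) hz.
Qed.

Lemma dom_resolventn_bounded x :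
  D x <-> exists K : nat, forall n, nrm (C (resolventn n x)) <= K%:R.
Proof.
split=> [Dx|[K /C_resolventn_cvg []] //].
exists (Num.Def.trunc (nrm (C x))).+1 => n.
apply: le_trans (C_resolventn_le n Dx) _; exact: ltW (truncnS_gt _).
Qed.

Lemma resolventn_lipschitz n x x' :
  nrm (resolventn n x - resolventn n x') ^+ 2 <= nrm (x - x') ^+ 2.
Proof.
apply: le_trans (resolvent_lipschitz x x' (natSinv_gt0 n)); rewrite lerDl.
by rewrite mulr_ge0 ?sqr_ge0 // divr_ge0.
Qed.

Lemma C_resolventn_lipschitz n x x' :
  nrm (C (resolventn n x) - C (resolventn n x')) ^+ 2
  <= (2 * n.+1%:R^-1)^-1 * nrm (x - x') ^+ 2.
Proof.
have := resolvent_lipschitz x x' (natSinv_gt0 (R := R) n); rewrite -!/(resolventn n _).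
have h2 := mulr_gt0 (ltr0n R 2) (natSinv_gt0 (R := R) n).
rewrite ler_pdivlMl //; have := sqr_ge0 (nrm (resolventn n x - resolventn n x')).
by move: (n.+1%:R^-1 : R) h2 => s h2; lra.
Qed.

Lemma continuous_C_resolventn n : continuous (fun x => C (resolventn n x)).
Proof. exact: lipschitz_sqr_continuous (C_resolventn_lipschitz n). Qed.

Lemma borel_dom : borel_sets D.
Proof.
have -> : D = \bigcup_(K : nat) \bigcap_n
    ~` ((fun x => C (resolventn n x)) @^-1` [set y | K%:R < nrm y]).
  apply/seteqP; split => x.
    by case/dom_resolventn_bounded => K hK; exists K => // n _ /=; apply/negP; rewrite -leNgt.
  case=> K _ hK; apply/dom_resolventn_bounded; exists K => n.
  by have /negP := hK n I; rewrite -leNgt.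
apply: borel_bigcup => K; apply: borel_bigcap => n; apply: borel_setC; apply: borel_open.
exact: (continuousP _).1 (continuous_C_resolventn n) _ (open_nrm_gt _).
Qed.

Context {L : V -> V}.
Hypothesis HL : bounded_from_graph D C L.

Lemma L_graph_bound :
  exists m : R, forall x, D x -> nrm (L x) ^+ 2 <= m ^+ 2 * (nrm x ^+ 2 + nrm (C x) ^+ 2).
Proof.
case: HL => _ [M [hM hb]]; exists (complex.Re M) => x Dx.
have := hb x Dx; rewrite /graph_norm2 !normc_nrm.
have -> : M = (complex.Re M)%:C by rewrite RRe_real //; exact: ger0_real.
by rewrite -!rmorphXn -rmorphD -rmorphM lecR.
Qed.

Lemma continuous_L_resolventn n : continuous (fun x => L (resolventn n x)).
Proof.
have [m hm] := L_graph_bound.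
apply: (lipschitz_sqr_continuous _ (m ^+ 2 * (1 + (2 * n.+1%:R^-1)^-1))) => x x'.
have [Da Da'] := (resolventn_dom n x, resolventn_dom n x').
have := hm _ (subspaceB Dsub Da Da').
rewrite (linear_onB Dsub HL.1) // (linear_onB Dsub Clin) // => /le_trans; apply.
rewrite -mulrA ler_wpM2l ?sqr_ge0 // mulrDl mul1r.
exact: lerD (resolventn_lipschitz n x x') (C_resolventn_lipschitz n x x').
Qed.

Lemma L_resolventn_cvg x : D x -> cvgV (fun n => L (resolventn n x)) (L x).
Proof.
move=> Dx; have [m hm] := L_graph_bound.
have [K /C_resolventn_cvg [_ hC]] := (dom_resolventn_bounded x).1 Dx.
apply: (cvgV_sqr_bound (k := m ^+ 2) (resolventn_cvg x) hC) => n.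
have Da := resolventn_dom n x; have := hm _ (subspaceB Dsub Da Dx).
by rewrite (linear_onB Dsub HL.1) // (linear_onB Dsub Clin).
Qed.

End SelfAdjoint.

Arguments resolvent {R V} D C s x.
Arguments resolventn {R V} D C n x.

(* [U (f x)] is tested by the continuous [g n] staying, from some index on, at distance
   at least [1/(k+1)] from the complement of [U]. *)
Lemma borel_measurable_cvg_on {R : realType} {V : completeNormedModType R[i]}
    (f : V -> V) (g : nat -> V -> V) (E : set V) (c : V) :
  borel_sets E -> (forall n, continuous (g n)) ->
  (forall x, E x -> cvgV (fun n => g n x) (f x)) -> (forall x, ~ E x -> f x = c) ->
  borel_measurable f.
Proof.
move=> hE hg hf hc; apply: borel_measurable_open => U hU.
set O := fun k : nat => [set y | exists2 z, ~ U z & nrm (y - z) < k.+1%:R^-1].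
set G := \bigcup_k \bigcup_N \bigcap_j (g (N + j)%N @^-1` ~` O k).
have hG x : E x -> U (f x) <-> G x.
  move=> Ex; split.
    move=> /((openP_nrm U).1 hU) [r hr hb].
    have [k hk] := natSinv_lt (divr_gt0 hr (ltr0n R 2)).
    have [N hN] := hf x Ex _ (divr_gt0 hr (ltr0n R 2)).
    exists k => //; exists N => // j _ [z hz hd]; apply/hz/hb.
    have := nrm_triangle (f x - g (N + j)%N x) (g (N + j)%N x - z).
    rewrite addrA subrK nrm_distC; have := hN _ (leq_addr j N); have := hk k (leqnn k).
    by move: hd; move: (k.+1%:R^-1 : R) => *; lra.
  case=> k _ [N _ hN]; apply/not_notP => hnU.
  have [N' hN'] := hf x Ex _ (natSinv_gt0 k).
  by apply: (hN N' I); exists (f x) => //; rewrite addnC; exact/hN'/leq_addr.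
have -> : f @^-1` U = (E `&` G) `|` (~` E `&` [set _ | U c]).
  apply/seteqP; split => x /=.
    by have [Ex|nEx] := pselect (E x); [left; split; last exact/hG | right; rewrite -(hc x nEx)].
  by case=> [[Ex /(hG x Ex)] | [nEx]] //; rewrite (hc x nEx).
apply: borel_setU; last by apply: borel_setI; [exact: borel_setC | exact: borel_const].
apply: borel_setI => //; apply: borel_bigcup => k; apply: borel_bigcup => N.
apply: borel_bigcap => j.
rewrite preimage_setC; apply: borel_setC; apply: borel_open.
exact: (continuousP _).1 (hg (N + j)%N) _ (open_near (~` U) k.+1%:R^-1).
Qed.

Lemma pi_dom_in {R : realType} {V : completeNormedModType R[i]} (D : set V) x :
  D x -> pi_dom D x = x.
Proof. by move=> Dx; rewrite /pi_dom; case: pselect. Qed.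

Lemma pi_dom_out {R : realType} {V : completeNormedModType R[i]} (D : set V) x :
  ~ D x -> pi_dom D x = 0.
Proof. by move=> nDx; rewrite /pi_dom; case: pselect. Qed.

Theorem lemma5p2 (R : realType) (V : completeNormedModType R[i])
    (ip : V -> V -> R[i]) (Hip : is_inner_product ip) (Hsep : separable_space V)
    (D : set V) (C : V -> V) (HCsa : self_adjoint ip D C) (HCpos : positive_op ip D C)
    (L : V -> V) (HL : bounded_from_graph D C L) :
  borel_measurable (L \o pi_dom D).
Proof.
apply: (borel_measurable_cvg_on _ (fun n x => L (resolventn D C n x)) D (L 0)).
- exact (borel_dom Hip HCsa).
- exact (continuous_L_resolventn Hip HCsa HL).
- by move=> x Dx; rewrite /= pi_dom_in //; exact (L_resolventn_cvg Hip HCsa HL x Dx).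
- by move=> x nDx; rewrite /= pi_dom_out.
Qed.
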